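(* Fix integers $M>N\geq1$, positive reals $P_1,P_2,P_r,d_{d1},d_{d2},d_{r1},d_{r2},d_{dr},\alpha$, and weights $\mu_1\in[0,1]$, $\mu_2=1-\mu_1$. With $\mathcal C(x)=\log(1+x)$ define, for $Q_1,Q_2>0$, $I_1=\mathcal{C}\big(\tfrac{P_1(M-N)}{d_{d1}^{\alpha}}+\tfrac{P_1}{(d_{r1}^{\alpha}/N)+Q_1}\big)$, $I_2=\mathcal{C}\big(\tfrac{P_1(M-N)}{d_{d1}^{\alpha}}\big)+\zeta$, $I_3=\mathcal{C}\big(\tfrac{P_2(M-N)}{d_{d2}^{\alpha}}+\tfrac{P_2}{(d_{r2}^{\alpha}/N)+Q_2}\big)$, $I_4=\mathcal{C}\big(\tfrac{P_2(M-N)}{d_{d2}^{\alpha}}\big)+\zeta$, $I_5=\mathcal{C}\big(\tfrac{P_1(M-N)}{d_{d1}^{\alpha}}\big)+\mathcal{C}\big(\tfrac{P_2(M-N)}{d_{d2}^{\alpha}}\big)+\zeta$, where $\zeta=N\mathcal{C}\big(\tfrac{P_r(M-N)}{Nd_{dr}^{\alpha}}\big)-\mathcal{C}\big(\tfrac{d_{r1}^{\alpha}}{NQ_1}\big)-\mathcal{C}\big(\tfrac{d_{r2}^{\alpha}}{NQ_2}\big)$. Consider the problem $$\max_{R_1,R_2,Q_1,Q_2}\ \mu_1R_1+\mu_2R_2\quad\text{s.t. } R_1\le\min\{I_1,I_2\},\ R_2\le\min\{I_3,I_4\},\ R_1+R_2\le I_5,\ Q_1\ge0,\ Q_2\ge0.$$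 Let $a_k=1+\frac{P_k(M-N)}{d_{dk}^{\alpha}}$, $\lambda_s=\big(1+\frac{P_r(M-N)}{Nd_{dr}^{\alpha}}\big)^N$, $A=\mu_2P_2(d_{r1}^{\alpha}/N)a_1$, $B=(\mu_1-\mu_2)P_1P_2$, $C=-\mu_1P_1(d_{r2}^{\alpha}/N)a_2\lambda_s$, $\lambda_o=(2A)^{-1}(B+\sqrt{B^2-4AC})$, $\lambda_1^*=\min\{\max\{\lambda_o,1\},\lambda_s\}$ (i.e. $\lambda_1^*=1$ if $\lambda_o<1$ and $\lambda_1^*=\lambda_s$ if $\lambda_o>\lambda_s$), and $\lambda_2^*=\lambda_s/\lambda_1^*$. Then optimal quantization noise variances for this problem are $$Q_k^*=\frac{(d_{rk}^{\alpha}/N)\,a_k+P_k}{a_k(\lambda_k^*-1)},\qquad k\in\{1,2\}.$$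
   Context: When $\lambda_k^*=1$ the formula gives $Q_k^*=+\infty$, meaning that the data stream of user $k$ is not quantized/forwarded; in that case the expressions involving $Q_k$ are understood as their limits as $Q_k\to\infty$ (i.e. $\frac{P_k}{(d_{rk}^\alpha/N)+Q_k}\to0$ and $\mathcal C(\frac{d_{rk}^\alpha}{NQ_k})\to0$), and optimality is in the sense of the supremum of the problem. These quantities arise as the achievable rate region of quantize-forward relaying with joint decoding in a massive MIMO heterogeneous network with two users, relay (small-cell base station, $N$ antennas) and destination (macro-cell base station, $M$ antennas). *)

From Stdlib Require Import Reals Lra.
Open Scope R_scope.

Record sysp := Sysp {
  sM : nat; sN : nat;
  P1 : R; P2 : R; Pr : R;
  dd1 : R; dd2 : R; dr1 : R; dr2 : R; ddr : R;
  alpha : R;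
  mu1 : R }.

Definition mu2 (s : sysp) : R := 1 - mu1 s.

(* C(x) = log(1+x) (natural log; the base only rescales all rates). *)
Definition Ccap (x : R) : R := ln (1 + x).

Definition pw (s : sysp) (d : R) : R := Rpower d (alpha s).

Definition Nr (s : sysp) : R := INR (sN s).
Definition MN (s : sysp) : R := INR (sM s) - INR (sN s).

(* Quantization noise variances are extended positive reals:
   Some q = finite q, None = +infinity (stream not forwarded).  The
   expressions involving Q are their limits as Q -> +infinity in that case. *)
Definition relterm (s : sysp) (P d : R) (Q : option R) : R :=
  match Q with Some q => P / (pw s d / Nr s + q) | None => 0 end.

Definition qpen (s : sysp) (d : R) (Q : option R) : R :=
  match Q with Some q => Ccap (pw s d / (Nr s * q)) | None => 0 end.

Definition zeta (s : sysp) (Q1 Q2 : option R) : R :=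
  Nr s * Ccap (Pr s * MN s / (Nr s * pw s (ddr s)))
  - qpen s (dr1 s) Q1 - qpen s (dr2 s) Q2.

Definition I1 s Q1 (Q2 : option R) :=
  Ccap (P1 s * MN s / pw s (dd1 s) + relterm s (P1 s) (dr1 s) Q1).
Definition I2 s Q1 Q2 := Ccap (P1 s * MN s / pw s (dd1 s)) + zeta s Q1 Q2.
Definition I3 s (Q1 : option R) Q2 :=
  Ccap (P2 s * MN s / pw s (dd2 s) + relterm s (P2 s) (dr2 s) Q2).
Definition I4 s Q1 Q2 := Ccap (P2 s * MN s / pw s (dd2 s)) + zeta s Q1 Q2.
Definition I5 s Q1 Q2 :=
  Ccap (P1 s * MN s / pw s (dd1 s)) + Ccap (P2 s * MN s / pw s (dd2 s))
  + zeta s Q1 Q2.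

Definition feasible (s : sysp) (R1 R2 : R) (Q1 Q2 : option R) : Prop :=
  R1 <= Rmin (I1 s Q1 Q2) (I2 s Q1 Q2) /\
  R2 <= Rmin (I3 s Q1 Q2) (I4 s Q1 Q2) /\
  R1 + R2 <= I5 s Q1 Q2.

Definition objective (s : sysp) (R1 R2 : R) : R := mu1 s * R1 + mu2 s * R2.

Definition a1 s := 1 + P1 s * MN s / pw s (dd1 s).
Definition a2 s := 1 + P2 s * MN s / pw s (dd2 s).
Definition lam_s s := (1 + Pr s * MN s / (Nr s * pw s (ddr s))) ^ sN s.
Definition cA s := mu2 s * P2 s * (pw s (dr1 s) / Nr s) * a1 s.
Definition cB s := (mu1 s - mu2 s) * P1 s * P2 s.
Definition cC s := - mu1 s * P1 s * (pw s (dr2 s) / Nr s) * a2 s * lam_s s.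
Definition lam_o s := / (2 * cA s) * (cB s + sqrt (cB s ^ 2 - 4 * cA s * cC s)).

(* lambda_1^* = min{max{lambda_o,1},lambda_s}.  When A = 0 (i.e. mu1 = 1)
   lambda_o = (B + |B|)/(2A) with B > 0 is +infinity, so lambda_1^* = lambda_s. *)
Definition lam1star s :=
  if Req_EM_T (cA s) 0 then lam_s s else Rmin (Rmax (lam_o s) 1) (lam_s s).
Definition lam2star s := lam_s s / lam1star s.

Definition Qstar_gen s (d a P lam : R) : option R :=
  if Req_EM_T lam 1 then None
  else Some ((pw s d / Nr s * a + P) / (a * (lam - 1))).

Definition Q1star s := Qstar_gen s (dr1 s) (a1 s) (P1 s) (lam1star s).
Definition Q2star s := Qstar_gen s (dr2 s) (a2 s) (P2 s) (lam2star s).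

From Stdlib Require Import Reals Lra Lia Psatz.
From Coquelicot Require Import Coquelicot.
Open Scope R_scope.

(* Reparametrize each quantization noise by [lambda_k >= 1] through
   [Q_k = (D_k a_k + P_k) / (a_k (lambda_k - 1))], [D_k = d_rk^alpha / N].
   Then [1 + D_k / Q_k = u_k(lambda_k) := (a_k lambda_k + b_k) / (a_k + b_k)]
   with [b_k = P_k / D_k], so [I1 = ln a_1 + ln lambda_1 - ln u_1(lambda_1)]
   and [zeta = ln lambda_s - ln u_1 - ln u_2].  Since [1 <= u_k(lambda) <= lambda],
   every feasible point is dominated by one on the curve
   [lambda_1 lambda_2 = lambda_s] whose rates are the individual bounds, so the
   problem reduces to maximizing [Phi(l) = mu_1 F_1(l) + mu_2 F_2(lambda_s / l)]
   over [1 <= l <= lambda_s].  [Phi'(l)] has the sign of [-A l^2 + B l - C]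
   with [A >= 0 >= C], whose only positive root is [lambda_o]; hence [Phi]
   increases up to [lambda_1^*] and decreases afterwards.  When [lambda_1^*]
   is an endpoint one of the [Q_k^*] is infinite, and the optimum is only a
   supremum over finite noises, approached by continuity of [Phi]. *)

Lemma exp_le_of_le_ln x y : 0 < y -> x <= ln y -> exp x <= y.
Proof.
  intros Hy [Hlt | ->]; [|rewrite exp_ln; lra].
  left; rewrite <- (exp_ln y) by exact Hy; now apply exp_increasing.
Qed.

Lemma derive_sign_change_max (f f' : R -> R) a b x0 :
  a <= x0 <= b ->
  (forall c, a <= c <= b -> derivable_pt_lim f c (f' c)) ->
  (forall c, a < c < x0 -> 0 <= f' c) ->
  (forall c, x0 < c < b -> f' c <= 0) ->
  forall x, a <= x <= b -> f x <= f x0.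
Proof.
  intros Hx0 Hf Hinc Hdec x Hx.
  destruct (Rtotal_order x x0) as [Hlt | [-> | Hgt]]; [| lra |].
  - destruct (MVT_cor2 f f' x x0 Hlt) as [c [Hc Hcx]].
    { intros c Hc; apply Hf; lra. }
    assert (0 <= f' c) by (apply Hinc; lra). nra.
  - destruct (MVT_cor2 f f' x0 x Hgt) as [c [Hc Hcx]].
    { intros c Hc; apply Hf; lra. }
    assert (f' c <= 0) by (apply Hdec; lra). nra.
Qed.

Lemma continuity_pt_interior_approx (f : R -> R) a b x0 eps :
  a < b -> a <= x0 <= b -> continuity_pt f x0 -> 0 < eps ->
  exists x, a < x < b /\ f x0 - eps <= f x.
Proof.
  intros Hab Hx0 Hf Heps.
  destruct (Hf eps Heps) as [del [Hdel Hclose]]; simpl in Hclose; unfold R_dist in Hclose.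
  set (t := Rmin (1 / 2) (del / (b - a))).
  assert (Ht : 0 < t <= 1 / 2 /\ t * (b - a) <= del).
  { assert (0 < del / (b - a)) by (apply Rdiv_lt_0_compat; lra).
    assert (del / (b - a) * (b - a) = del) by (field; lra).
    unfold t, Rmin; destruct Rle_dec; nra. }
  set (x := x0 + t * ((a + b) / 2 - x0)).
  exists x; split; [unfold x; nra|].
  destruct (Req_dec x x0) as [-> | Hne]; [lra|].
  assert (Hfx : Rabs (f x - f x0) < eps).
  { apply Hclose; split; [split; [exact I | congruence]|].
    unfold x; replace (x0 + t * ((a + b) / 2 - x0) - x0) with (t * ((a + b) / 2 - x0)) by ring.
    apply Rabs_def1; nra. }
  apply Rabs_def2 in Hfx; lra.
Qed.

Definition clamped_root (A B C hi : R) : R :=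
  if Req_EM_T A 0 then hi
  else Rmin (Rmax (/ (2 * A) * (B + sqrt (B ^ 2 - 4 * A * C))) 1) hi.

Lemma clamped_root_sign A B C hi :
  0 <= A -> C <= 0 -> (A = 0 -> 0 <= B) -> 1 <= hi ->
  1 <= clamped_root A B C hi <= hi /\
  (forall c, 1 < c < clamped_root A B C hi -> 0 <= - A * c ^ 2 + B * c - C) /\
  (forall c, clamped_root A B C hi < c < hi -> - A * c ^ 2 + B * c - C <= 0).
Proof.
  intros HA HC HB Hhi; unfold clamped_root.
  destruct (Req_EM_T A 0) as [HA0|HA0].
  - specialize (HB HA0); subst A.
    split; [lra|split; [intros c Hc; nra | intros c Hc; lra]].
  - assert (HAp : 0 < A) by lra.
    set (sq := sqrt (B ^ 2 - 4 * A * C)).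
    assert (Hsq : 0 <= sq /\ sq * sq = B ^ 2 - 4 * A * C)
      by (split; [apply sqrt_pos | apply sqrt_sqrt; nra]).
    set (lo := / (2 * A) * (B + sq)).
    set (lm := / (2 * A) * (B - sq)).
    (* the discriminant is at least B^2, so the smaller root is nonpositive *)
    assert (Hlm : lm <= 0).
    { assert (0 < / (2 * A)) by (apply Rinv_0_lt_compat; lra).
      assert (B <= sq) by nra. unfold lm; nra. }
    assert (Hfac : forall c, - A * c ^ 2 + B * c - C = - A * (c - lo) * (c - lm)).
    { intro c; unfold lo, lm; field_simplify; [|lra].
      replace (sq ^ 2) with (sq * sq) by ring; rewrite (proj2 Hsq); field; lra. }
    split; [unfold Rmin, Rmax; repeat destruct Rle_dec; lra|].
    split; intros c Hc; rewrite Hfac.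
    + assert (c < lo) by (unfold Rmin, Rmax in Hc; repeat destruct Rle_dec; lra).
      assert (0 <= (lo - c) * (c - lm)) by nra. nra.
    + assert (lo < c /\ 1 < c) by (unfold Rmin, Rmax in Hc; repeat destruct Rle_dec; lra).
      assert (0 <= (c - lo) * (c - lm)) by nra. nra.
Qed.

Section RateCurve.

Variables a b : R.
Hypotheses (Ha : 0 < a) (Hb : 0 < b).

Definition qratio (l : R) : R := (a * l + b) / (a + b).

Definition rate (l : R) : R := ln a + ln l - ln (qratio l).

Lemma qratio_gt0 l : 0 < l -> 0 < qratio l.
Proof. intros; unfold qratio; apply Rdiv_lt_0_compat; nra. Qed.

Lemma qratio_1 : qratio 1 = 1.
Proof. unfold qratio; field; lra. Qed.

Lemma qratio_ge1 l : 1 <= l -> 1 <= qratio l.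
Proof.
  intros; unfold qratio; apply Rmult_le_reg_r with (a + b); [lra|].
  field_simplify; nra.
Qed.

Lemma qratio_le l : 1 <= l -> qratio l <= l.
Proof.
  intros; unfold qratio; apply Rmult_le_reg_r with (a + b); [lra|].
  field_simplify; nra.
Qed.

Lemma qratio_le_compat x y : x <= y -> qratio x <= qratio y.
Proof.
  intros; unfold qratio, Rdiv; apply Rmult_le_compat_r; [|nra].
  left; apply Rinv_0_lt_compat; lra.
Qed.

Lemma rate_le_compat x y : 0 < x -> x <= y -> rate x <= rate y.
Proof.
  intros Hx Hxy; unfold rate.
  pose proof (qratio_gt0 x Hx); pose proof (qratio_gt0 y ltac:(lra)).
  assert (Hcross : qratio y * x <= y * qratio x).
  { unfold qratio; apply Rmult_le_reg_r with (a + b); [lra|]; field_simplify; nra. }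
  apply ln_le in Hcross; [|nra].
  rewrite !ln_mult in Hcross by lra. lra.
Qed.

Lemma le_rate_exp R t l :
  0 < l -> t <= ln l -> R - ln a + ln (qratio l) <= t -> R <= rate (exp t).
Proof.
  intros Hl Htl HR; unfold rate; rewrite ln_exp.
  assert (ln (qratio (exp t)) <= ln (qratio l)).
  { apply ln_le; [apply qratio_gt0, exp_pos|].
    apply qratio_le_compat, exp_le_of_le_ln; assumption. }
  lra.
Qed.

End RateCurve.

Section LambdaRegion.

Variables a1 b1 a2 b2 ls : R.
Hypotheses (Ha1 : 0 < a1) (Hb1 : 0 < b1) (Ha2 : 0 < a2) (Hb2 : 0 < b2) (Hls : 1 < ls).

Definition lam_region (R1 R2 l1 l2 : R) : Prop :=
  R1 <= rate a1 b1 l1 /\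
  R1 <= ln a1 + (ln ls - ln (qratio a1 b1 l1) - ln (qratio a2 b2 l2)) /\
  R2 <= rate a2 b2 l2 /\
  R2 <= ln a2 + (ln ls - ln (qratio a1 b1 l1) - ln (qratio a2 b2 l2)) /\
  R1 + R2 <= ln a1 + ln a2 + (ln ls - ln (qratio a1 b1 l1) - ln (qratio a2 b2 l2)).

Lemma lam_region_on_curve l :
  1 <= l <= ls -> lam_region (rate a1 b1 l) (rate a2 b2 (ls / l)) l (ls / l).
Proof.
  intros Hl.
  assert (Hl2 : 1 <= ls / l) by (apply Rle_div_r; lra).
  pose proof (qratio_le a1 b1 Ha1 Hb1 l ltac:(lra)).
  pose proof (qratio_le a2 b2 Ha2 Hb2 (ls / l) Hl2).
  pose proof (qratio_ge1 a1 b1 Ha1 Hb1 l ltac:(lra)).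
  pose proof (qratio_ge1 a2 b2 Ha2 Hb2 (ls / l) Hl2).
  assert (ln (qratio a1 b1 l) <= ln l) by (apply ln_le; lra).
  assert (ln (qratio a2 b2 (ls / l)) <= ln (ls / l)) by (apply ln_le; lra).
  assert (0 <= ln (qratio a1 b1 l)) by (rewrite <- ln_1; apply ln_le; lra).
  assert (0 <= ln (qratio a2 b2 (ls / l))) by (rewrite <- ln_1; apply ln_le; lra).
  rewrite ln_div in * by lra.
  unfold lam_region, rate; rewrite ln_div by lra; lra.
Qed.

(* If [l1 l2 <= ls], enlarging [l1] to [ls / l2] only helps; otherwise the
   log-coordinate [t] below satisfies all the constraints at once. *)
Lemma lam_region_dominated R1 R2 l1 l2 :
  1 <= l1 -> 1 <= l2 -> lam_region R1 R2 l1 l2 ->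
  exists l, 1 <= l <= ls /\ R1 <= rate a1 b1 l /\ R2 <= rate a2 b2 (ls / l).
Proof.
  intros Hl1 Hl2 [C1 [C2 [C3 [C4 C5]]]].
  set (u1 := qratio a1 b1 l1) in *; set (u2 := qratio a2 b2 l2) in *.
  assert (0 <= ln u1) by (rewrite <- ln_1; apply ln_le, qratio_ge1; lra).
  assert (0 <= ln u2) by (rewrite <- ln_1; apply ln_le, qratio_ge1; lra).
  destruct (Rle_lt_dec (l1 * l2) ls) as [Hle|Hgt].
  - exists (ls / l2).
    assert (l1 <= ls / l2) by (apply Rle_div_r; lra).
    assert (ls / l2 <= ls) by (apply Rle_div_l; nra).
    replace (ls / (ls / l2)) with l2 by (field; lra).
    split; [lra|split; [|exact C3]].
    apply Rle_trans with (rate a1 b1 l1); [exact C1|apply rate_le_compat; lra].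
  - set (L := ln ls) in *.
    set (p1 := R1 - ln a1 + ln u1); set (p2 := R2 - ln a2 + ln u2).
    assert (Hlog : L < ln l1 + ln l2) by (rewrite <- ln_mult by lra; apply ln_increasing; lra).
    assert (0 <= ln l1) by (rewrite <- ln_1; apply ln_le; lra).
    assert (0 <= ln l2) by (rewrite <- ln_1; apply ln_le; lra).
    assert (0 <= L) by (unfold L; rewrite <- ln_1; apply ln_le; lra).
    unfold rate in C1, C3; fold u1 in C1; fold u2 in C3.
    set (t := Rmax (Rmax p1 (L - ln l2)) 0).
    assert (T : p1 <= t /\ L - ln l2 <= t /\ 0 <= t /\ t <= ln l1 /\ t <= L - p2 /\ t <= L)
      by (unfold t, Rmax, p1, p2; repeat destruct Rle_dec; repeat split; lra).
    exists (exp t).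
    assert (Hexp : ls / exp t = exp (L - t)).
    { unfold Rminus; rewrite exp_plus, exp_Ropp; unfold L; rewrite exp_ln; lra. }
    split; [split|split].
    + pose proof (exp_ineq1_le t); lra.
    + apply exp_le_of_le_ln; fold L; lra.
    + apply le_rate_exp with l1; fold u1; unfold p1 in T; lra.
    + rewrite Hexp; apply le_rate_exp with l2; fold u2; unfold p2 in T; lra.
Qed.

Variable m : R.

Definition wrate (l : R) : R := m * rate a1 b1 l + (1 - m) * rate a2 b2 (ls / l).

Definition wrate' (c : R) : R :=
  m * b1 / (c * (a1 * c + b1)) - (1 - m) * b2 / (a2 * ls + b2 * c).

Lemma wrate_derive c : 0 < c -> derivable_pt_lim wrate c (wrate' c).
Proof.
  intros Hc; apply is_derive_Reals; unfold wrate, wrate', rate, qratio.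
  assert (0 < / c) by (apply Rinv_0_lt_compat; lra).
  assert (0 < / (a1 + b1)) by (apply Rinv_0_lt_compat; lra).
  assert (0 < / (a2 + b2)) by (apply Rinv_0_lt_compat; lra).
  assert (0 < ls * / c) by (apply Rmult_lt_0_compat; lra).
  assert (0 < a2 * (ls * / c) + b2) by nra.
  auto_derive.
  - repeat split; try lra; apply Rmult_lt_0_compat; nra.
  - assert (E : a2 * (ls * / c) + b2 = (a2 * ls + b2 * c) / c) by (field; lra).
    rewrite E in *; assert (0 < a2 * ls + b2 * c) by nra.
    field; repeat split; try lra; intro; nra.
Qed.

End LambdaRegion.

Definition relay_snr (s : sysp) (P d : R) : R := P / (pw s d / Nr s).

Section System.

Variable s : sysp.
Hypotheses (HN : (1 <= sN s)%nat) (HNM : (sN s < sM s)%nat).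
Hypotheses (HP1 : 0 < P1 s) (HP2 : 0 < P2 s) (HPr : 0 < Pr s).
Hypothesis Hmu : 0 <= mu1 s <= 1.

Local Notation b1 := (relay_snr s (P1 s) (dr1 s)).
Local Notation b2 := (relay_snr s (P2 s) (dr2 s)).
Local Notation Phi := (wrate (a1 s) b1 (a2 s) b2 (lam_s s) (mu1 s)).

(* [Rpower] is [exp (alpha * ln d)], positive whatever the sign of [d] and [alpha]. *)
Lemma pw_gt0 d : 0 < pw s d.
Proof. apply exp_pos. Qed.

Lemma Nr_gt0 : 0 < Nr s.
Proof. apply lt_0_INR; lia. Qed.

Lemma MN_gt0 : 0 < MN s.
Proof. unfold MN; pose proof (lt_INR _ _ HNM); lra. Qed.

Lemma direct_gain_gt1 P d : 0 < P -> 1 < 1 + P * MN s / pw s d.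
Proof.
  intros; assert (0 < P * MN s / pw s d); [|lra].
  apply Rdiv_lt_0_compat; [apply Rmult_lt_0_compat, MN_gt0 | apply pw_gt0]; assumption.
Qed.

Lemma a1_gt1 : 1 < a1 s.
Proof. exact (direct_gain_gt1 (P1 s) (dd1 s) HP1). Qed.

Lemma a2_gt1 : 1 < a2 s.
Proof. exact (direct_gain_gt1 (P2 s) (dd2 s) HP2). Qed.

Lemma relay_snr_gt0 P d : 0 < P -> 0 < relay_snr s P d.
Proof.
  intros; apply Rdiv_lt_0_compat, Rdiv_lt_0_compat; auto using pw_gt0, Nr_gt0.
Qed.

Lemma lam_s_gt1 : 1 < lam_s s.
Proof.
  apply Rlt_pow_R1; [|lia].
  assert (0 < Pr s * MN s / (Nr s * pw s (ddr s))); [|lra].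
  apply Rdiv_lt_0_compat; apply Rmult_lt_0_compat; auto using MN_gt0, Nr_gt0, pw_gt0.
Qed.

Lemma backhaul_rate_ln_lam_s :
  Nr s * Ccap (Pr s * MN s / (Nr s * pw s (ddr s))) = ln (lam_s s).
Proof.
  unfold lam_s, Ccap; rewrite ln_pow; [reflexivity|].
  assert (0 < Pr s * MN s / (Nr s * pw s (ddr s))); [|lra].
  apply Rdiv_lt_0_compat; apply Rmult_lt_0_compat; auto using MN_gt0, Nr_gt0, pw_gt0.
Qed.

Lemma Qstar_gen_rates d x P l :
  0 < 1 + x -> 0 < P -> 1 <= l ->
  Ccap (x + relterm s P d (Qstar_gen s d (1 + x) P l)) = rate (1 + x) (relay_snr s P d) l /\
  qpen s d (Qstar_gen s d (1 + x) P l) = ln (qratio (1 + x) (relay_snr s P d) l).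
Proof.
  intros Ha HP Hl.
  pose proof (pw_gt0 d); pose proof Nr_gt0.
  pose proof (relay_snr_gt0 P d HP) as Hb.
  unfold Qstar_gen, rate.
  destruct (Req_EM_T l 1) as [-> | Hl1]; simpl; unfold Ccap.
  - rewrite (qratio_1 _ _ Ha Hb), ln_1, !Rplus_0_r; split; [ring | reflexivity].
  - unfold qratio, relay_snr in *.
    assert (0 < P * Nr s) by (apply Rmult_lt_0_compat; assumption).
    assert (0 < (1 + x) * l * pw s d) by (apply Rmult_lt_0_compat; nra).
    assert (0 < (1 + x) * pw s d) by nra.
    rewrite <- ln_mult, <- ln_div; try (apply Rdiv_lt_0_compat; nra); try nra.
    split; f_equal; field; repeat split; nra.
Qed.

Lemma Qstar_gen_finite d a P l :
  0 < a -> 0 < P -> 1 < l -> exists q, 0 < q /\ Qstar_gen s d a P l = Some q.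
Proof.
  intros Ha HP Hl; unfold Qstar_gen.
  destruct (Req_EM_T l 1) as [E | _]; [lra|].
  eexists; split; [|reflexivity].
  pose proof (pw_gt0 d); pose proof Nr_gt0.
  apply Rdiv_lt_0_compat; [|nra].
  assert (0 < pw s d / Nr s) by (apply Rdiv_lt_0_compat; assumption); nra.
Qed.

Lemma Qstar_gen_onto d a P q :
  0 < a -> 0 < P -> 0 < q -> exists l, 1 < l /\ Qstar_gen s d a P l = Some q.
Proof.
  intros Ha HP Hq.
  pose proof (pw_gt0 d); pose proof Nr_gt0.
  set (D := pw s d / Nr s).
  assert (HD : 0 < D) by (apply Rdiv_lt_0_compat; assumption).
  exists (1 + (D * a + P) / (a * q)).
  assert (0 < (D * a + P) / (a * q)) by (apply Rdiv_lt_0_compat; nra).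
  split; [lra|]; unfold Qstar_gen.
  destruct (Req_EM_T _ 1); [lra|].
  f_equal; fold D; field; repeat split; nra.
Qed.

Lemma feasible_iff_lam_region R1 R2 l1 l2 :
  1 <= l1 -> 1 <= l2 ->
  feasible s R1 R2 (Qstar_gen s (dr1 s) (a1 s) (P1 s) l1)
                   (Qstar_gen s (dr2 s) (a2 s) (P2 s) l2) <->
  lam_region (a1 s) b1 (a2 s) b2 (lam_s s) R1 R2 l1 l2.
Proof.
  intros Hl1 Hl2.
  pose proof a1_gt1 as Ha1; pose proof a2_gt1 as Ha2.
  destruct (Qstar_gen_rates (dr1 s) (P1 s * MN s / pw s (dd1 s)) (P1 s) l1)
    as [E1 F1]; [unfold a1 in Ha1; lra | assumption..|].
  destruct (Qstar_gen_rates (dr2 s) (P2 s * MN s / pw s (dd2 s)) (P2 s) l2)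
    as [E2 F2]; [unfold a2 in Ha2; lra | assumption..|].
  unfold feasible, I1, I2, I3, I4, I5, zeta, a1, a2.
  rewrite E1, E2, F1, F2, backhaul_rate_ln_lam_s.
  unfold lam_region, Ccap, Rmin; split.
  - intros [C1 [C2 C3]]. repeat destruct Rle_dec; repeat split; lra.
  - intros [C1 [C2 [C3 [C4 C5]]]]. repeat destruct Rle_dec; repeat split; lra.
Qed.

Lemma wrate'_factor c :
  0 < c ->
  wrate' (a1 s) b1 (a2 s) b2 (lam_s s) (mu1 s) c *
    (pw s (dr1 s) / Nr s * (pw s (dr2 s) / Nr s) *
     (c * (a1 s * c + b1) * (a2 s * lam_s s + b2 * c)))
  = - cA s * c ^ 2 + cB s * c - cC s.
Proof.
  intros Hc.
  pose proof (pw_gt0 (dr1 s)); pose proof (pw_gt0 (dr2 s)); pose proof Nr_gt0.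
  pose proof a1_gt1; pose proof a2_gt1.
  pose proof (relay_snr_gt0 (P1 s) (dr1 s) HP1).
  pose proof (relay_snr_gt0 (P2 s) (dr2 s) HP2).
  pose proof lam_s_gt1.
  assert (0 < a1 s * c + b1) by nra.
  assert (0 < a2 s * lam_s s + b2 * c) by nra.
  assert (0 < a1 s * c * pw s (dr1 s)) by (repeat apply Rmult_lt_0_compat; lra).
  assert (0 < a2 s * lam_s s * pw s (dr2 s)) by (repeat apply Rmult_lt_0_compat; lra).
  assert (0 < P1 s * Nr s) by (apply Rmult_lt_0_compat; lra).
  assert (0 < P2 s * Nr s * c) by (repeat apply Rmult_lt_0_compat; lra).
  unfold wrate', cA, cB, cC, mu2, relay_snr in *.
  field; repeat split; lra.
Qed.

Lemma lam1star_sign :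
  1 <= lam1star s <= lam_s s /\
  (forall c, 1 < c < lam1star s -> 0 <= - cA s * c ^ 2 + cB s * c - cC s) /\
  (forall c, lam1star s < c < lam_s s -> - cA s * c ^ 2 + cB s * c - cC s <= 0).
Proof.
  pose proof a1_gt1; pose proof a2_gt1; pose proof lam_s_gt1.
  set (K1 := P2 s * (pw s (dr1 s) / Nr s) * a1 s).
  set (K2 := P1 s * (pw s (dr2 s) / Nr s) * a2 s * lam_s s).
  assert (0 < K1) by (unfold K1; pose proof (pw_gt0 (dr1 s)); pose proof Nr_gt0;
                      repeat apply Rmult_lt_0_compat; try apply Rinv_0_lt_compat; lra).
  assert (0 < K2) by (unfold K2; pose proof (pw_gt0 (dr2 s)); pose proof Nr_gt0;
                      repeat apply Rmult_lt_0_compat; try apply Rinv_0_lt_compat; lra).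
  assert (EA : cA s = (1 - mu1 s) * K1) by (unfold cA, mu2, K1; ring).
  assert (EC : cC s = - (mu1 s * K2)) by (unfold cC, K2; ring).
  apply clamped_root_sign; [rewrite EA; nra | rewrite EC; nra | | lra].
  (* [A = 0] forces [mu1 = 1], where [B = P1 P2 > 0] *)
  rewrite EA; intros HA0; assert (mu1 s = 1) by nra.
  unfold cB, mu2; assert (0 < P1 s * P2 s) by (apply Rmult_lt_0_compat; assumption); nra.
Qed.

Lemma wrate_le_lam1star l : 1 <= l <= lam_s s -> Phi l <= Phi (lam1star s).
Proof.
  pose proof a1_gt1; pose proof a2_gt1; pose proof lam_s_gt1.
  pose proof (relay_snr_gt0 (P1 s) (dr1 s) HP1).
  pose proof (relay_snr_gt0 (P2 s) (dr2 s) HP2).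
  destruct lam1star_sign as [Hbnd [Hinc Hdec]].
  assert (Hweight : forall c, 0 < c ->
    0 < pw s (dr1 s) / Nr s * (pw s (dr2 s) / Nr s) *
        (c * (a1 s * c + b1) * (a2 s * lam_s s + b2 * c))).
  { intros c Hc; pose proof (pw_gt0 (dr1 s)); pose proof (pw_gt0 (dr2 s)); pose proof Nr_gt0.
    repeat apply Rmult_lt_0_compat; try apply Rinv_0_lt_compat; nra. }
  apply (derive_sign_change_max Phi (wrate' (a1 s) b1 (a2 s) b2 (lam_s s) (mu1 s)) 1 (lam_s s)).
  - exact Hbnd.
  - intros c Hc; apply wrate_derive; lra.
  - intros c Hc; pose proof (wrate'_factor c ltac:(lra)); pose proof (Hweight c ltac:(lra)).
    pose proof (Hinc c Hc); nra.
  - intros c Hc; pose proof (wrate'_factor c ltac:(lra)); pose proof (Hweight c ltac:(lra)).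
    pose proof (Hdec c Hc); nra.
Qed.

Local Notation R1star := (rate (a1 s) b1 (lam1star s)).
Local Notation R2star := (rate (a2 s) b2 (lam2star s)).

Lemma feasible_star : feasible s R1star R2star (Q1star s) (Q2star s).
Proof.
  destruct lam1star_sign as [Hbnd _].
  pose proof a1_gt1; pose proof a2_gt1; pose proof lam_s_gt1.
  unfold Q1star, Q2star, lam2star.
  apply feasible_iff_lam_region; [lra | |].
  - apply Rle_div_r; lra.
  - apply lam_region_on_curve; auto using relay_snr_gt0; lra.
Qed.

Lemma objective_le_star R1 R2 q1 q2 :
  0 < q1 -> 0 < q2 -> feasible s R1 R2 (Some q1) (Some q2) ->
  objective s R1 R2 <= objective s R1star R2star.
Proof.
  intros Hq1 Hq2 Hf.
  pose proof a1_gt1; pose proof a2_gt1; pose proof lam_s_gt1.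
  destruct (Qstar_gen_onto (dr1 s) (a1 s) (P1 s) q1) as [l1 [Hl1 E1]]; try lra.
  destruct (Qstar_gen_onto (dr2 s) (a2 s) (P2 s) q2) as [l2 [Hl2 E2]]; try lra.
  rewrite <- E1, <- E2, feasible_iff_lam_region in Hf by lra.
  pose proof (relay_snr_gt0 (P1 s) (dr1 s) HP1) as Hb1.
  pose proof (relay_snr_gt0 (P2 s) (dr2 s) HP2) as Hb2.
  destruct (lam_region_dominated (a1 s) b1 (a2 s) b2 (lam_s s)
              ltac:(lra) Hb1 ltac:(lra) Hb2 ltac:(lra) R1 R2 l1 l2)
    as [l [Hl [HR1 HR2]]]; try lra; try assumption.
  change (objective s R1star R2star) with (Phi (lam1star s)).
  apply Rle_trans with (Phi l); [unfold objective, mu2, wrate; nra|].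
  apply wrate_le_lam1star; exact Hl.
Qed.

Lemma objective_star_approx eps :
  0 < eps ->
  exists R1 R2 q1 q2, 0 < q1 /\ 0 < q2 /\
    feasible s R1 R2 (Some q1) (Some q2) /\
    objective s R1star R2star - eps <= objective s R1 R2.
Proof.
  intros Heps.
  pose proof a1_gt1; pose proof a2_gt1; pose proof lam_s_gt1.
  pose proof (relay_snr_gt0 (P1 s) (dr1 s) HP1).
  pose proof (relay_snr_gt0 (P2 s) (dr2 s) HP2).
  destruct lam1star_sign as [Hbnd _].
  assert (Hcont : continuity_pt Phi (lam1star s)).
  { apply derivable_continuous_pt; eexists; apply wrate_derive; lra. }
  destruct (continuity_pt_interior_approx Phi 1 (lam_s s) (lam1star s) eps)
    as [l [Hl Hclose]]; try lra; try assumption.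
  assert (Hl2 : 1 < lam_s s / l) by (apply Rlt_div_r; lra).
  destruct (Qstar_gen_finite (dr1 s) (a1 s) (P1 s) l) as [q1 [Hq1 E1]]; try lra.
  destruct (Qstar_gen_finite (dr2 s) (a2 s) (P2 s) (lam_s s / l)) as [q2 [Hq2 E2]]; try lra.
  exists (rate (a1 s) b1 l), (rate (a2 s) b2 (lam_s s / l)), q1, q2.
  split; [exact Hq1 | split; [exact Hq2 | split]].
  - rewrite <- E1, <- E2; apply feasible_iff_lam_region; try lra.
    apply lam_region_on_curve; lra.
  - exact Hclose.
Qed.

End System.

Theorem theorem2 (s : sysp) :
  (1 <= sN s)%nat -> (sN s < sM s)%nat ->
  0 < P1 s -> 0 < P2 s -> 0 < Pr s ->
  0 < dd1 s -> 0 < dd2 s -> 0 < dr1 s -> 0 < dr2 s -> 0 < ddr s ->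
  0 < alpha s ->
  0 <= mu1 s <= 1 ->
  exists (R1s R2s : R),
    feasible s R1s R2s (Q1star s) (Q2star s) /\
    (* the point (R1s, R2s, Q1star, Q2star) is at least as good as every feasible point *)
    (forall (R1 R2 q1 q2 : R), 0 < q1 -> 0 < q2 ->
       feasible s R1 R2 (Some q1) (Some q2) ->
       objective s R1 R2 <= objective s R1s R2s) /\
    (* and its value is the supremum of the problem (approached by
       finite feasible points) *)
    (forall eps : R, 0 < eps ->
       exists (R1 R2 q1 q2 : R), 0 < q1 /\ 0 < q2 /\
         feasible s R1 R2 (Some q1) (Some q2) /\
         objective s R1s R2s - eps <= objective s R1 R2).
Proof.
  intros HN HNM HP1 HP2 HPr _ _ _ _ _ _ Hmu.
  exists (rate (a1 s) (relay_snr s (P1 s) (dr1 s)) (lam1star s)),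
         (rate (a2 s) (relay_snr s (P2 s) (dr2 s)) (lam2star s)).
  split; [|split].
  - exact (feasible_star s HN HNM HP1 HP2 HPr Hmu).
  - intros R1 R2 q1 q2; exact (objective_le_star s HN HNM HP1 HP2 HPr Hmu R1 R2 q1 q2).
  - intros eps; exact (objective_star_approx s HN HNM HP1 HP2 HPr Hmu eps).
Qed.
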